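(* Let $m$ and $n$ be positive integers. A layer-rainbow latin cube of order $m$ can be extended to (i.e., embedded as the $m\times m\times m$ subarray on the first $m$ indices in each coordinate of) a layer-rainbow latin cube of order $n$ if and only if $n\geq 2m$.
   Context: An $n\times n\times n$ array $L$ has cells indexed by triples $(i,j,k)$ with $i,j,k\in\{1,\dots,n\}$. A layer of $L$ is the set of cells obtained by fixing one coordinate (so there are $3n$ layers, each containing $n^2$ cells). $L$ is a layer-rainbow latin cube of order $n$ if each cell is filled with one of $n^2$ symbols such that every layer contains every symbol exactly once. A layer-rainbow latin cube $M$ of order $m$ is extended to a layer-rainbow latin cube $L$ of order $n$ if $L$ restricted to the cells $\{1,\dots,m\}^3$ coincides with $M$ (the $m^2$ symbols of $M$ being among the $n^2$ symbols of $L$). *)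

From mathcomp Require Import all_boot.
Set Implicit Arguments. Unset Strict Implicit. Unset Printing Implicit Defensive.

Definition cube (n : nat) := 'I_n -> 'I_n -> 'I_n -> 'I_(n ^ 2).

Definition layer_rainbow (n : nat) (L : cube n) : Prop :=
  forall (a : 'I_n) (s : 'I_(n ^ 2)),
    [/\ #|[set p : 'I_n * 'I_n | L a p.1 p.2 == s]| = 1,
        #|[set p : 'I_n * 'I_n | L p.1 a p.2 == s]| = 1 &
        #|[set p : 'I_n * 'I_n | L p.1 p.2 a == s]| = 1].

Definition extends_to (m n : nat) (M : cube m) (L : cube n) : Prop :=
  exists f : 'I_(m ^ 2) -> 'I_(n ^ 2), injective f /\
    forall (i j k : 'I_m) (i' j' k' : 'I_n),
      val i = val i' -> val j = val j' -> val k = val k' ->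
      L i' j' k' = f (M i j k).

Definition extendable (m n : nat) (M : cube m) : Prop :=
  exists L : cube n, layer_rainbow L /\ extends_to M L.

From mathcomp Require Import all_boot zify.
Set Implicit Arguments. Unset Strict Implicit. Unset Printing Implicit Defensive.

(* Necessity: every symbol of M occurs in the layer i = m of L, but never in a cell (m, j, k)
   with j < m or k < m, since the layer of L through that j (or k) already contains it inside
   the corner.  So the m^2 symbols of M fit into the (n - m)^2 cells with j, k >= m.
   Sufficiency: if the latin square G of order n has a subsquare on its first m rows and
   columns, the cube (i, j, k) |-> (G i j, G i k) is layer-rainbow and uses pairs of symbols
   below m only on the corner and on the far block {m, ..., n - 1}^3; hence replacing its corner
   by M keeps it layer-rainbow.  For n >= 2m such a G is obtained by bordering the cyclic square
   of order m with cyclic squares on the n - m new symbols and filling the far block along its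
   diagonals, the new symbols being spread by a perfect shuffle. *)

Lemma card_fibers1P (T : finType) n (f : T -> 'I_n) : #|T| = n ->
  (forall s, #|[set p | f p == s]| = 1) <-> injective f.
Proof.
move=> cardT; split=> [fib1 p p' eq_f | f_inj s].
  have [z Ez] := mem_card1 (fib1 (f p)).
  by move: (Ez p) (Ez p'); rewrite !inE eq_f eqxx => /esym/eqP -> /esym/eqP ->.
have /codomP[p ->] : s \in codom f by apply: inj_card_onto; rewrite // cardT card_ord.
by rewrite -(cards1 p); apply: eq_card => p'; rewrite !inE (inj_eq f_inj).
Qed.

Lemma card_cells n : #|{: 'I_n * 'I_n}| = n ^ 2.
Proof. by rewrite card_prod card_ord mulnn. Qed.

Lemma layer_rainbowP n (L : cube n) :
  layer_rainbow L <->
  (forall i j k i' j' k', L i j k = L i' j' k' -> [|| i == i', j == j' | k == k'] ->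
     [/\ i = i', j = j' & k = k']).
Proof.
have fibers1P := card_fibers1P _ (card_cells n).
split=> [rbL i j k i' j' k' eqL | injL a s].
  case/or3P=> /eqP eq_c; rewrite -{}eq_c in eqL *.
  - have /fibers1P injL : forall s, #|[set p | L i p.1 p.2 == s]| = 1.
      by move=> s; case: (rbL i s).
    by case: (injL (j, k) (j', k') eqL) => -> ->.
  - have /fibers1P injL : forall s, #|[set p | L p.1 j p.2 == s]| = 1.
      by move=> s; case: (rbL j s).
    by case: (injL (i, k) (i', k') eqL) => -> ->.
  - have /fibers1P injL : forall s, #|[set p | L p.1 p.2 k == s]| = 1.
      by move=> s; case: (rbL k s).
    by case: (injL (i, j) (i', j') eqL) => -> ->.
split; move: s; apply/fibers1P => -[j k] [j' k'] /= eqL.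
- by case: (injL _ _ _ _ _ _ eqL); rewrite ?eqxx // => _ -> ->.
- by case: (injL _ _ _ _ _ _ eqL); rewrite ?eqxx ?orbT // => -> _ ->.
- by case: (injL _ _ _ _ _ _ eqL); rewrite ?eqxx ?orbT // => -> -> _.
Qed.

Lemma layer_rainbow_swap n (L : cube n) :
  layer_rainbow L -> layer_rainbow (fun i j k => L i k j).
Proof.
move=> /layer_rainbowP injL; apply/layer_rainbowP => i j k i' j' k' eqL share.
have {}share : [|| i == i', k == k' | j == j'] by rewrite orbCA orbC -orbA.
by case: (injL _ _ _ _ _ _ eqL share) => -> -> ->.
Qed.

Section Necessity.

Variables (m n : nat) (M : cube m) (L : cube n) (f : 'I_(m ^ 2) -> 'I_(n ^ 2)).
Hypotheses (rbM : layer_rainbow M) (rbL : layer_rainbow L).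
Hypothesis LM : forall (i j k : 'I_m) (i' j' k' : 'I_n),
  val i = val i' -> val j = val j' -> val k = val k' -> L i' j' k' = f (M i j k).

Lemma mixed_cell_not_old (a j k : 'I_n) s : m <= a -> j < m -> L a j k != f s.
Proof.
move=> le_m_a lt_j_m; apply/eqP => Lf.
have le_mn : m <= n by rewrite ltnW // (leq_ltn_trans le_m_a).
have [_ Mj _] := rbM (Ordinal lt_j_m) s.
have /card_gt0P[[i0 k0]] : 0 < #|[set p | M p.1 (Ordinal lt_j_m) p.2 == s]| by rewrite Mj.
rewrite inE => /eqP /= Ms.
have := @LM i0 (Ordinal lt_j_m) k0 (widen_ord le_mn i0) j (widen_ord le_mn k0) erefl erefl erefl.
rewrite Ms -Lf => /((layer_rainbowP L).1 rbL); rewrite eqxx orbT => /(_ isT)[eq_i _ _].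
by move: (ltn_ord i0); rewrite [X in X < _](congr1 val eq_i) ltnNge le_m_a.
Qed.

End Necessity.

Lemma extension_order_ge m n (M : cube m) (L : cube n) :
  m < n -> layer_rainbow M -> layer_rainbow L -> extends_to M L -> 2 * m <= n.
Proof.
move=> lt_mn rbM rbL [f [f_inj LM]]; pose a := Ordinal lt_mn.
have [pos Lpos] : exists pos : 'I_(m ^ 2) -> 'I_n * 'I_n,
    forall s, L a (pos s).1 (pos s).2 = f s.
  apply: (fin_all_exists (P := fun s (p : 'I_n * 'I_n) => L a p.1 p.2 = f s)) => s.
  have [La _ _] := rbL a (f s).
  have /card_gt0P[p] : 0 < #|[set p | L a p.1 p.2 == f s]| by rewrite La.
  by rewrite inE => /eqP; exists p.
have new_pos s : m <= (pos s).1 /\ m <= (pos s).2.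
  split; rewrite leqNgt; apply/negP => lt_m.
    by case/eqP: (mixed_cell_not_old rbM rbL LM (a := a) (pos s).2 s (leqnn m) lt_m).
  have LM' i j k i' j' k' : val i = val i' -> val j = val j' -> val k = val k' ->
      L i' k' j' = f (M i k j) by move=> *; apply: LM.
  have := mixed_cell_not_old (layer_rainbow_swap rbM) (layer_rainbow_swap rbL) LM'.
  by move=> /(_ a _ (pos s).1 s (leqnn m) lt_m) /eqP[].
pose shift (i : 'I_n) : 'I_(n - m) := Ordinal (ltn_sub2r lt_mn (ltn_ord i)).
have shift_inj : injective (fun s => (shift (pos s).1, shift (pos s).2)).
  move=> s s' [] eq1 eq2; apply: f_inj; rewrite -!Lpos.
  have [? ?] := new_pos s; have [? ?] := new_pos s'.
  by congr (L a _ _); apply: ord_inj; lia.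
have := leq_card _ shift_inj; rewrite card_prod !card_ord mulnn leq_exp2r //; lia.
Qed.

Ltac lia_cases :=
  repeat match goal with |- context[if ?b then _ else _] =>
    lazymatch b with context[if _ then _ else _] => fail | _ => case: (boolP b) => ? end
  end; lia.

Definition latin_on n (F : nat -> nat -> nat) :=
  [/\ forall x y, x < n -> y < n -> F x y < n,
      forall x y y', x < n -> y < n -> y' < n -> F x y = F x y' -> y = y' &
      forall x x' y, x < n -> x' < n -> y < n -> F x y = F x' y -> x = x'].

Definition add_mod r x y := if x + y < r then x + y else x + y - r.
Definition sub_mod r x y := if y <= x then x - y else x + r - y.

Lemma add_mod_lt r x y : x < r -> y < r -> add_mod r x y < r.
Proof. by rewrite /add_mod; lia_cases. Qed.

Lemma add_modI r x y y' : x < r -> y < r -> y' < r ->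
  add_mod r x y = add_mod r x y' -> y = y'.
Proof. by rewrite /add_mod; lia_cases. Qed.

Lemma add_modIl r x x' y : x < r -> x' < r -> y < r ->
  add_mod r x y = add_mod r x' y -> x = x'.
Proof. by rewrite /add_mod; lia_cases. Qed.

Lemma sub_modIl r x x' y : x < r -> x' < r -> y < r ->
  sub_mod r x y = sub_mod r x' y -> x = x'.
Proof. by rewrite /sub_mod; lia_cases. Qed.

Lemma add_modACK r x y z : x < r -> y < r -> z < r ->
  sub_mod r (add_mod r (add_mod r x y) z) y = add_mod r x z.
Proof. by rewrite /add_mod /sub_mod; lia_cases. Qed.

(* Rows, columns and symbols below m are old, the others are new.  The far block cell (x, y)
   lies on the diagonal s = x + y (mod r); it holds the old symbol low s unless new_diag s, in
   which case it holds the new symbol x + a s = b s - y (mod r).  So far row x misses the new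
   symbols x + [q, r) and far column y misses [q, r) - y, which the border blocks supply. *)
Section ExtendedSquare.

Variables (m q : nat) (new_diag : pred nat) (a b low : nat -> nat).
Let r := q + m.
Hypothesis m_gt0 : 0 < m.
Hypothesis a_lt : forall s, s < r -> new_diag s -> a s < q.
Hypothesis b_lt : forall s, s < r -> new_diag s -> b s < q.
Hypothesis add_a : forall s, s < r -> new_diag s -> add_mod r s (a s) = b s.
Hypothesis a_inj : {in [pred s | (s < r) && new_diag s] &, injective a}.
Hypothesis b_inj : {in [pred s | (s < r) && new_diag s] &, injective b}.
Hypothesis low_lt : forall s, s < r -> ~~ new_diag s -> low s < m.
Hypothesis low_inj : {in [pred s | (s < r) && ~~ new_diag s] &, injective low}.

Let lt_qr : q < r. Proof. rewrite /r; lia. Qed.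

Let a_ltr s : s < r -> new_diag s -> a s < r.
Proof. by move=> lt_sr /(a_lt lt_sr) /ltn_trans; apply. Qed.

Let b_ltr s : s < r -> new_diag s -> b s < r.
Proof. by move=> lt_sr /(b_lt lt_sr) /ltn_trans; apply. Qed.

Definition far_block x y :=
  let s := add_mod r x y in if new_diag s then m + add_mod r x (a s) else low s.

Lemma far_block_lt x y : x < r -> y < r -> far_block x y < m + r.
Proof.
move=> lt_xr lt_yr; rewrite /far_block; have lt_sr := add_mod_lt lt_xr lt_yr.
case: ifP => new_s; last by have := low_lt lt_sr (negbT new_s); lia.
by rewrite ltn_add2l add_mod_lt // a_ltr.
Qed.

Lemma far_block_row_inj x y y' : x < r -> y < r -> y' < r ->
  far_block x y = far_block x y' -> y = y'.
Proof.
move=> lt_xr lt_yr lt_y'r; rewrite /far_block.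
have lt_sr := add_mod_lt lt_xr lt_yr; have lt_s'r := add_mod_lt lt_xr lt_y'r.
case: ifP => new_s; case: ifP => new_s' eq_xy.
- move/addnI/(add_modI lt_xr (a_ltr lt_sr new_s) (a_ltr lt_s'r new_s'))/a_inj: eq_xy.
  by rewrite !inE lt_sr lt_s'r new_s new_s' => /(_ isT isT) /add_modI; apply.
- by have := low_lt lt_s'r (negbT new_s'); lia.
- by have := low_lt lt_sr (negbT new_s); lia.
move/low_inj: eq_xy; rewrite !inE lt_sr lt_s'r new_s new_s' => /(_ isT isT).
exact: add_modI.
Qed.

Lemma far_block_new x y : x < r -> y < r -> new_diag (add_mod r x y) ->
  far_block x y = m + sub_mod r (b (add_mod r x y)) y.
Proof.
move=> lt_xr lt_yr new_s; have lt_sr := add_mod_lt lt_xr lt_yr.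
by rewrite /far_block new_s -add_a // add_modACK // a_ltr.
Qed.

Lemma far_block_col_inj x x' y : x < r -> x' < r -> y < r ->
  far_block x y = far_block x' y -> x = x'.
Proof.
move=> lt_xr lt_x'r lt_yr.
have lt_sr := add_mod_lt lt_xr lt_yr; have lt_s'r := add_mod_lt lt_x'r lt_yr.
case new_s: (new_diag (add_mod r x y)); case new_s': (new_diag (add_mod r x' y)).
- rewrite !far_block_new // => /addnI.
  move/(sub_modIl (b_ltr lt_sr new_s) (b_ltr lt_s'r new_s') lt_yr)/b_inj.
  by rewrite !inE lt_sr lt_s'r new_s new_s' => /(_ isT isT); apply: add_modIl.
- rewrite far_block_new // /far_block new_s'.
  by have := low_lt lt_s'r (negbT new_s'); lia.
- rewrite [far_block x' y]far_block_new // /far_block new_s.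
  by have := low_lt lt_sr (negbT new_s); lia.
rewrite /far_block new_s new_s' => /low_inj; rewrite !inE lt_sr lt_s'r new_s new_s'.
by move=> /(_ isT isT); apply: add_modIl.
Qed.

Lemma far_block_neq_left x y z : x < r -> y < r -> z < m ->
  far_block x y != m + add_mod r x (q + z).
Proof.
move=> lt_xr lt_yr lt_zm; have lt_sr := add_mod_lt lt_xr lt_yr; rewrite /far_block.
case: ifP => new_s; last by have := low_lt lt_sr (negbT new_s); lia.
have lt_qz : q + z < r by rewrite ltn_add2l.
apply/eqP => /addnI /(add_modI lt_xr (a_ltr lt_sr new_s) lt_qz).
by have := a_lt lt_sr new_s; lia.
Qed.

Lemma far_block_neq_top x y z : x < r -> y < r -> z < m ->
  far_block x y != m + sub_mod r (q + z) y.
Proof.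
move=> lt_xr lt_yr lt_zm; have lt_sr := add_mod_lt lt_xr lt_yr.
case new_s: (new_diag (add_mod r x y)); last first.
  by rewrite /far_block new_s; have := low_lt lt_sr (negbT new_s); lia.
have lt_qz : q + z < r by rewrite ltn_add2l.
rewrite far_block_new //; apply/eqP => /addnI /(sub_modIl (b_ltr lt_sr new_s) lt_qz lt_yr).
by have := b_lt lt_sr new_s; lia.
Qed.

Definition ext_square x y :=
  if x < m then if y < m then add_mod m x y else m + sub_mod r (q + x) (y - m)
  else if y < m then m + add_mod r (x - m) (q + y) else far_block (x - m) (y - m).

Lemma ext_square_latin : latin_on (m + r) ext_square.
Proof.
split=> [x y lt_x lt_y | x y y' lt_x lt_y lt_y' | x x' y lt_x lt_x' lt_y]; rewrite /ext_square.
- case: ifP => x_old; case: ifP => y_old; try by rewrite /add_mod /sub_mod; lia_cases.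
  by apply: far_block_lt; lia.
- case: ifP => x_old; case: ifP => y_old; case: ifP => y'_old;
    try by rewrite /add_mod /sub_mod; lia_cases.
  + move=> eq_xy; suff: far_block (x - m) (y' - m) != m + add_mod r (x - m) (q + y).
      by rewrite -eq_xy eqxx.
    by apply: far_block_neq_left; lia.
  + move=> eq_xy; suff: far_block (x - m) (y - m) != m + add_mod r (x - m) (q + y').
      by rewrite eq_xy eqxx.
    by apply: far_block_neq_left; lia.
  + by move/far_block_row_inj; lia.
- case: ifP => x_old; case: ifP => x'_old; case: ifP => y_old;
    try by rewrite /add_mod /sub_mod; lia_cases.
  + move=> eq_xy; suff: far_block (x' - m) (y - m) != m + sub_mod r (q + x) (y - m).
      by rewrite -eq_xy eqxx.
    by apply: far_block_neq_top; lia.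
  + move=> eq_xy; suff: far_block (x - m) (y - m) != m + sub_mod r (q + x') (y - m).
      by rewrite eq_xy eqxx.
    by apply: far_block_neq_top; lia.
  + by move/far_block_col_inj; lia.
Qed.

Lemma ext_square_sep x y : (x < m) != (y < m) -> m <= ext_square x y.
Proof. by rewrite /ext_square; case: ifP; case: ifP; rewrite ?leq_addr. Qed.

End ExtendedSquare.

Section Shuffle.

Variables m c q : nat.
Hypotheses (m_gt0 : 0 < m) (c_half_q : 2 * c <= q <= 2 * c + 1).
Let r := q + m.

(* With t = s + c (mod r), the new diagonals are t in [0, 2c], except t = c when q is even.
   On them a |-> b is the perfect shuffle of [0, q) (upper half to the even, lower half to the
   odd numbers), and b - a = t - c, which is s modulo r. *)
Definition shuffle_index s := add_mod r s c.
Definition shuffle_new s := let t := shuffle_index s in (t + c < q) || (c < t <= 2 * c).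
Definition shuffle_a s := let t := shuffle_index s in if t + c < q then t + c else t - c - 1.
Definition shuffle_b s :=
  let t := shuffle_index s in if t + c < q then 2 * t else 2 * t - 2 * c - 1.
Definition shuffle_low s := let t := shuffle_index s in if t == c then m - 1 else t - 2 * c - 1.

Ltac unfold_shuffle :=
  rewrite /shuffle_new /shuffle_a /shuffle_b /shuffle_low /shuffle_index /add_mod /r.

Lemma shuffle_a_lt s : s < r -> shuffle_new s -> shuffle_a s < q.
Proof. unfold_shuffle; lia_cases. Qed.

Lemma shuffle_b_lt s : s < r -> shuffle_new s -> shuffle_b s < q.
Proof. unfold_shuffle; lia_cases. Qed.

Lemma shuffle_add_a s : s < r -> shuffle_new s -> add_mod r s (shuffle_a s) = shuffle_b s.
Proof. unfold_shuffle; lia_cases. Qed.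

Lemma shuffle_a_inj : {in [pred s | (s < r) && shuffle_new s] &, injective shuffle_a}.
Proof. move=> s s'; rewrite !inE; unfold_shuffle; lia_cases. Qed.

Lemma shuffle_b_inj : {in [pred s | (s < r) && shuffle_new s] &, injective shuffle_b}.
Proof. move=> s s'; rewrite !inE; unfold_shuffle; lia_cases. Qed.

Lemma shuffle_low_lt s : s < r -> ~~ shuffle_new s -> shuffle_low s < m.
Proof. unfold_shuffle; lia_cases. Qed.

Lemma shuffle_low_inj : {in [pred s | (s < r) && ~~ shuffle_new s] &, injective shuffle_low}.
Proof. move=> s s'; rewrite !inE; unfold_shuffle; lia_cases. Qed.

End Shuffle.

Lemma latin_on_subsquare m n : 0 < m -> 2 * m <= n ->
  exists F, latin_on n F /\ forall x y, (x < m) != (y < m) -> m <= F x y.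
Proof.
move=> m_gt0 le_2m_n; pose q := n - 2 * m; pose c := q %/ 2.
have -> : n = m + (q + m) by rewrite /q; lia.
have c_half_q : 2 * c <= q <= 2 * c + 1 by rewrite /c; lia.
exists (ext_square m q (shuffle_new m c q) (shuffle_a m c q) (shuffle_low m c q)).
split; last exact: ext_square_sep.
apply: (ext_square_latin (b := shuffle_b m c q)) => //.
- exact: shuffle_a_lt.
- exact: shuffle_b_lt.
- exact: shuffle_add_a.
- exact: shuffle_a_inj.
- exact: shuffle_b_inj.
- exact: shuffle_low_lt.
- exact: shuffle_low_inj.
Qed.

Definition latin_square n (G : 'I_n -> 'I_n -> 'I_n) :=
  (forall i : 'I_n, injective (G i)) /\ (forall j : 'I_n, injective (G^~ j)).

Lemma latin_square_subsquare m n : 0 < m -> 2 * m <= n ->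
  exists G : 'I_n -> 'I_n -> 'I_n,
    latin_square G /\ forall i j : 'I_n, (i < m) != (j < m) -> m <= G i j.
Proof.
move=> m_gt0 le_2m_n; have [F [[F_lt F_row F_col] F_sep]] := latin_on_subsquare m_gt0 le_2m_n.
exists (fun i j : 'I_n => Ordinal (F_lt i j (ltn_ord i) (ltn_ord j))).
split; last by move=> i j /F_sep.
split=> [i j j' | j i i'] /(congr1 val) /= eqF; apply: ord_inj.
  exact: F_row eqF.
exact: F_col eqF.
Qed.

Definition pair_symbol n (p : 'I_n * 'I_n) : 'I_(n ^ 2) :=
  cast_ord (card_cells n) (enum_rank p).

Definition symbol_pair n (s : 'I_(n ^ 2)) : 'I_n * 'I_n :=
  enum_val (cast_ord (esym (card_cells n)) s).

Lemma pair_symbol_inj n : injective (@pair_symbol n).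
Proof. by move=> p p' /cast_ord_inj /enum_rank_inj. Qed.

Lemma symbol_pairK n : cancel (@symbol_pair n) (@pair_symbol n).
Proof. by move=> s; rewrite /pair_symbol /symbol_pair enum_valK cast_ordKV. Qed.

Definition widen_symbol m n (le_mn : m <= n) (s : 'I_(m ^ 2)) : 'I_(n ^ 2) :=
  pair_symbol (widen_ord le_mn (symbol_pair s).1, widen_ord le_mn (symbol_pair s).2).

Lemma widen_symbol_inj m n (le_mn : m <= n) : injective (widen_symbol le_mn).
Proof.
move=> s s' /pair_symbol_inj [eq1 eq2].
apply: (can_inj (@symbol_pairK m)).
by case: (symbol_pair s) (symbol_pair s') eq1 eq2 => [? ?] [? ?] /= /ord_inj -> /ord_inj ->.
Qed.

Definition pair_cube n (G : 'I_n -> 'I_n -> 'I_n) : cube n :=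
  fun i j k => pair_symbol (G i j, G i k).

Lemma pair_cube_rainbow n (G : 'I_n -> 'I_n -> 'I_n) :
  latin_square G -> layer_rainbow (pair_cube G).
Proof.
move=> [G_row G_col]; apply/layer_rainbowP => i j k i' j' k'.
move=> /pair_symbol_inj [eq_j eq_k] /or3P[] /eqP eq_c; subst.
- by rewrite (G_row _ _ _ eq_j) (G_row _ _ _ eq_k).
- by have eq_i := G_col _ _ _ eq_j; subst; rewrite (G_row _ _ _ eq_k).
- by have eq_i := G_col _ _ _ eq_k; subst; rewrite (G_row _ _ _ eq_j).
Qed.

Lemma pair_cube_corner m n (le_mn : m <= n) (G : 'I_n -> 'I_n -> 'I_n) :
  (forall i j : 'I_n, (i < m) != (j < m) -> m <= G i j) ->
  forall i j k s, pair_cube G i j k = widen_symbol le_mn s ->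
    [&& i < m, j < m & k < m] || [&& m <= i, m <= j & m <= k].
Proof.
move=> G_sep i j k s /pair_symbol_inj [eq_j eq_k].
have same_side (x y : 'I_n) : G x y < m -> (x < m) = (y < m).
  by apply: contraTeq => /G_sep; rewrite leqNgt.
have eq_ij : (i < m) = (j < m) by apply: same_side; rewrite eq_j /= ltn_ord.
have eq_ik : (i < m) = (k < m) by apply: same_side; rewrite eq_k /= ltn_ord.
by rewrite [m <= i]leqNgt [m <= j]leqNgt [m <= k]leqNgt -eq_ij -eq_ik; case: (i < m).
Qed.

Section CornerExtension.

Variables (m n : nat) (m_gt0 : 0 < m) (g : 'I_(m ^ 2) -> 'I_(n ^ 2)).
Variables (M : cube m) (N : cube n).

Definition narrow (i : 'I_n) : 'I_m := insubd (Ordinal m_gt0) i.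

Lemma narrowK (i : 'I_n) : i < m -> narrow i = i :> nat.
Proof. by rewrite /narrow val_insubd => ->. Qed.

Lemma narrow_eq (i : 'I_m) (i' : 'I_n) : val i = val i' -> narrow i' = i.
Proof. by move=> eq_i; apply: val_inj; rewrite /= narrowK -eq_i ?ltn_ord. Qed.

Lemma narrow_eqE (i i' : 'I_n) : i < m -> i' < m -> (narrow i == narrow i') = (i == i').
Proof. by move=> lt_i lt_i'; rewrite -val_eqE /= !narrowK. Qed.

Definition in_corner (i j k : 'I_n) := [&& i < m, j < m & k < m].

Definition extend_corner : cube n := fun i j k =>
  if in_corner i j k then g (M (narrow i) (narrow j) (narrow k)) else N i j k.

Lemma extend_cornerE (i j k : 'I_m) (i' j' k' : 'I_n) :
  val i = val i' -> val j = val j' -> val k = val k' -> extend_corner i' j' k' = g (M i j k).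
Proof.
move=> eq_i eq_j eq_k.
rewrite /extend_corner (narrow_eq eq_i) (narrow_eq eq_j) (narrow_eq eq_k).
by rewrite /in_corner -eq_i -eq_j -eq_k !ltn_ord.
Qed.

Hypotheses (rbM : layer_rainbow M) (rbN : layer_rainbow N) (g_inj : injective g).
Hypothesis N_corner_symbols : forall i j k s, N i j k = g s ->
  in_corner i j k || [&& m <= i, m <= j & m <= k].

Lemma extend_corner_rainbow : layer_rainbow extend_corner.
Proof.
have injM := (layer_rainbowP M).1 rbM; have injN := (layer_rainbowP N).1 rbN.
have mixed i j k i' j' k' : in_corner i j k -> ~~ in_corner i' j' k' ->
    extend_corner i j k = extend_corner i' j' k' -> ~~ [|| i == i', j == j' | k == k'].
  rewrite /extend_corner => cin cout; rewrite cin (negbTE cout) => /esym /N_corner_symbols.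
  rewrite (negbTE cout) => /and3P[? ? ?]; case/and3P: cin => *.
  by apply/negP => /or3P[] /eqP eq_c; subst; lia.
apply/layer_rainbowP => i j k i' j' k'.
case cin: (in_corner i j k); case cin': (in_corner i' j' k') => eqL share.
- move: eqL; rewrite /extend_corner cin cin' => /g_inj /injM.
  case/and3P: cin => ? ? ?; case/and3P: cin' => ? ? ?.
  rewrite !narrow_eqE // => /(_ share)[] /eqP + /eqP + /eqP.
  by rewrite !narrow_eqE // => /eqP -> /eqP -> /eqP ->.
- by have := mixed _ _ _ _ _ _ cin (negbT cin') eqL; rewrite share.
- have := mixed _ _ _ _ _ _ cin' (negbT cin) (esym eqL).
  by rewrite (eq_sym i') (eq_sym j') (eq_sym k') share.
by move: eqL; rewrite /extend_corner cin cin' => /injN; apply.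
Qed.

End CornerExtension.

Lemma extendable_of_order_ge m n (M : cube m) :
  0 < m -> 2 * m <= n -> layer_rainbow M -> extendable n M.
Proof.
move=> m_gt0 le_2m_n rbM; have le_mn : m <= n by lia.
have [G [latG G_sep]] := latin_square_subsquare m_gt0 le_2m_n.
exists (extend_corner m_gt0 (widen_symbol le_mn) M (pair_cube G)); split.
  apply: extend_corner_rainbow => //.
  - exact: pair_cube_rainbow.
  - exact: widen_symbol_inj.
  - exact: pair_cube_corner.
exists (widen_symbol le_mn); split; [exact: widen_symbol_inj | exact: extend_cornerE].
Qed.

Theorem theorem1 (m n : nat) : 0 < m -> m < n ->
  forall M : cube m, layer_rainbow M ->
    (extendable n M <-> 2 * m <= n).
Proof.
move=> m_gt0 lt_mn M rbM; split=> [[L [rbL extL]] | le_2m_n].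
  exact: extension_order_ge rbM rbL extL.
exact: extendable_of_order_ge.
Qed.
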